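(* Let $B\in M_4(\mathbb{F}_2)$ be a non-derogative matrix. Then there exist $N,D\in M_4(\mathbb{F}_2)$ with $B=N+D$, $N^2=0$ and $D^4=D$.
   Context: A square matrix is non-derogative if its minimal polynomial equals its characteristic polynomial. $\mathbb{F}_2$ denotes the field with two elements. *)

From mathcomp Require Import all_boot all_order all_algebra.
Set Implicit Arguments. Unset Strict Implicit. Unset Printing Implicit Defensive.
Import GRing.Theory.
Local Open Scope ring_scope.

Definition non_derogative (F : fieldType) (n : nat) (A : 'M[F]_n.+1) : Prop :=
  mxminpoly A = char_poly A.

From mathcomp Require Import all_boot all_order all_algebra.
Import GRing.Theory.
Set Implicit Arguments. Unset Strict Implicit. Unset Printing Implicit Defensive.
Local Open Scope ring_scope.

(* A non-derogative B has a cyclic vector v, and in the basis v, vB, vB^2, vB^3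
   it becomes the companion matrix C of its characteristic polynomial.  Over F_2
   there are only 16 companion matrices of size 4, and each one splits as
   C = N0 + (C + N0) with N0^2 = 0 and (C + N0)^4 = C + N0; conjugating back
   splits B.  Instead of proving the cyclic vector theorem, we run this
   construction on all 2^16 matrices of a boolean model of M_4(F_2) and check
   its output by computation; non-derogativity is only used to discard the
   matrices for which 1, B, B^2, B^3 are linearly dependent. *)

Lemma non_derogative_powers_free (F : fieldType) n (A : 'M[F]_n.+1) (c : nat -> F) :
  non_derogative A -> \sum_(k < n.+1) c k *: A ^+ k = 0 ->
  forall k, (k <= n)%N -> c k = 0.
Proof.
move=> ndA sum0 k le_kn.
have hornerA0 : horner_mx A (\poly_(k < n.+1) c k) = 0.
  rewrite poly_def rmorph_sum /= -[RHS]sum0; apply: eq_bigr => i _.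
  by rewrite horner_mxZ rmorphXn /= horner_mx_X.
have /eqP p0 : \poly_(k < n.+1) c k == 0.
  apply: contraTT (size_poly n.+1 c) => p_neq0.
  have := dvdp_leq p_neq0 (mxminpoly_min hornerA0).
  by rewrite ndA size_char_poly -ltnNge.
by have := coef_poly n.+1 c k; rewrite p0 coef0 ltnS le_kn.
Qed.

Lemma F2_natr_addb (a b : bool) : (a (+) b)%:R = a%:R + b%:R :> 'F_2.
Proof. by case: a; case: b; rewrite /= ?addr0 ?add0r //; apply: val_inj. Qed.

Lemma F2_natr_neq0 (x : 'F_2) : (x != 0)%:R = x.
Proof. by case: x => -[|[|//]] ?; apply: val_inj. Qed.

Fixpoint tuples_over (T : Type) (xs : seq T) (k : nat) : seq (seq T) :=
  if k is k'.+1 then [seq x :: s | x <- xs, s <- tuples_over xs k'] else [:: [::]].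

Lemma mem_tuples_over (T : eqType) (xs s : seq T) k :
  size s = k -> all (mem xs) s -> s \in tuples_over xs k.
Proof.
move=> <-; elim: s => [|x s IHs] //= /andP[xs_x /IHs s_in].
exact: allpairs_f.
Qed.

Definition bitseqs := tuples_over [:: false; true].

Fixpoint map2_pad (T : Type) (f : T -> T -> T) (s t : seq T) : seq T :=
  match s, t with
  | x :: s', y :: t' => f x y :: map2_pad f s' t'
  | [::], _ => t
  | _, [::] => s
  end.

Lemma nth_map2_pad (T : Type) (f : T -> T -> T) x0 :
  left_id x0 f -> right_id x0 f ->
  forall s t i, nth x0 (map2_pad f s t) i = f (nth x0 s i) (nth x0 t i).
Proof.
by move=> f0x fx0; elim=> [|x s IHs] [|y t] [|i] //=; rewrite ?f0x ?fx0 ?nth_nil.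
Qed.

Fixpoint lincomb (T : Type) (add : T -> T -> T) (z : T) (c : seq bool) (xs : seq T) : T :=
  match c, xs with
  | b :: c', x :: xs' => let y := lincomb add z c' xs' in if b then add x y else y
  | _, _ => z
  end.

Lemma lincomb_sum (T : Type) (V : zmodType) (add : T -> T -> T) (z : T) (phi : T -> V) :
  {morph phi : x y / add x y >-> x + y} -> phi z = 0 ->
  forall c xs n, (size xs <= n)%N ->
  phi (lincomb add z c xs) = \sum_(k < n) phi (nth z xs k) *+ nth false c k.
Proof.
move=> phiD phi0 c xs; elim: xs c => [|x xs IHxs] c n.
  have -> : lincomb add z c [::] = z by case: c.
  by rewrite phi0 big1 // => k _; rewrite nth_nil phi0 mul0rn.
case: n => [//|n] /=; rewrite ltnS => le_xs_n.
case: c => [|b c] /=; first by rewrite phi0 big1 // => k _; rewrite nth_nil mulr0n.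
rewrite big_ord_recl /= -IHxs //.
by case: b; rewrite ?phiD ?mulr1n ?mulr0n ?add0r.
Qed.

(* Matrices over F_2 as lists of rows of booleans; missing entries read as
   false. *)
Definition bmx := seq (seq bool).

Definition bentry (A : bmx) (i j : nat) : bool := nth false (nth [::] A i) j.

Definition bvadd : seq bool -> seq bool -> seq bool := map2_pad addb.
Definition badd : bmx -> bmx -> bmx := map2_pad bvadd.
Definition bvmul : seq bool -> bmx -> seq bool := lincomb bvadd [::].
Definition bmul (A C : bmx) : bmx := [seq bvmul r C | r <- A].
Definition b0 : bmx := [::].
Definition b1 : bmx :=
  [:: [:: true]; [:: false; true]; [:: false; false; true]; [:: false; false; false; true]].

Definition beq (A C : bmx) : bool :=
  all (fun i => all (fun j => bentry A i j == bentry C i j) (iota 0 4)) (iota 0 4).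

Definition mx_of_bmx (A : bmx) : 'M['F_2]_4 := \matrix_(i, j) (bentry A i j)%:R.

Lemma nth_bvadd u v j : nth false (bvadd u v) j = nth false u j (+) nth false v j.
Proof. exact: (nth_map2_pad addFb addbF). Qed.

Lemma nth_badd A C i : nth [::] (badd A C) i = bvadd (nth [::] A i) (nth [::] C i).
Proof. by apply: nth_map2_pad => // -[]. Qed.

Lemma nth_bmul A C i : nth [::] (bmul A C) i = bvmul (nth [::] A i) C.
Proof.
have [lt_iA | le_Ai] := ltnP i (size A); first by rewrite (nth_map [::]).
by rewrite !nth_default ?size_map.
Qed.

Lemma natr_bvmul r C j : (size C <= 4)%N ->
  (nth false (bvmul r C) j)%:R =
    \sum_(k < 4) (nth false r k)%:R * (bentry C k j)%:R :> 'F_2.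
Proof.
move=> le_C4; rewrite (@lincomb_sum _ _ _ _ (fun s => (nth false s j)%:R) _ _ r C 4 le_C4).
- by apply: eq_bigr => k _; rewrite mulr_natl.
- by move=> u v; rewrite nth_bvadd F2_natr_addb.
- by rewrite nth_nil.
Qed.

Lemma mx_of_bmx_mul A C :
  (size C <= 4)%N -> mx_of_bmx (bmul A C) = mx_of_bmx A *m mx_of_bmx C.
Proof.
move=> le_C4; apply/matrixP => i j; rewrite !mxE /bentry nth_bmul natr_bvmul //.
by apply: eq_bigr => k _; rewrite !mxE.
Qed.

Lemma mx_of_bmx_add A C : mx_of_bmx (badd A C) = mx_of_bmx A + mx_of_bmx C.
Proof. by apply/matrixP => i j; rewrite !mxE /bentry nth_badd nth_bvadd F2_natr_addb. Qed.

Lemma mx_of_bmx0 : mx_of_bmx b0 = 0.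
Proof. by apply/matrixP => i j; rewrite !mxE /bentry !nth_nil. Qed.

Lemma mx_of_bmx1 : mx_of_bmx b1 = 1.
Proof. by apply/matrixP => -[[|[|[|[|//]]]] ?] -[[|[|[|[|//]]]] ?]; rewrite !mxE. Qed.

Lemma mx_of_bmx_eq A C : beq A C -> mx_of_bmx A = mx_of_bmx C.
Proof.
move=> /allP eqAC; apply/matrixP => i j; rewrite !mxE.
have iota4 (k : 'I_4) : val k \in iota 0 4 by rewrite mem_iota ltn_ord.
by have /allP/(_ _ (iota4 j))/eqP -> := eqAC _ (iota4 i).
Qed.

(* The first element of [bitseqs 4] is the zero vector. *)
Definition nonzero_bits := behead (bitseqs 4).

Definition bpowers (B : bmx) : seq bmx := traject (bmul^~ B) b1 4.

Definition bderogatory (B : bmx) : bool :=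
  let Bs := bpowers B in has (fun c => beq (lincomb badd b0 c Bs) b0) nonzero_bits.

Lemma mx_of_bpowers B k : (size B <= 4)%N -> (k < 4)%N ->
  mx_of_bmx (nth b0 (bpowers B) k) = mx_of_bmx B ^+ k.
Proof.
move=> le_B4 lt_k4; rewrite /bpowers (set_nth_default b1) ?size_traject // nth_traject //.
elim: k lt_k4 => [|k IHk] lt_k4; first by rewrite mx_of_bmx1.
by rewrite iterS mx_of_bmx_mul // IHk ?exprSr ?mulmxE // ltnW.
Qed.

Lemma bderogatoryP B : (size B <= 4)%N -> bderogatory B -> ~ non_derogative (mx_of_bmx B).
Proof.
move=> le_B4 /hasP[c c_nz /mx_of_bmx_eq]; rewrite mx_of_bmx0.
rewrite (lincomb_sum mx_of_bmx_add mx_of_bmx0 c (n := 4)) ?size_traject // => sum0 ndB.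
have nz_bits : all (fun c => has (nth false c) (iota 0 4)) nonzero_bits by [].
have /hasP[k] := allP nz_bits c c_nz; rewrite mem_iota => /andP[_ lt_k4] c_k.
have : (nth false c k)%:R = 0 :> 'F_2.
  apply: (non_derogative_powers_free (c := fun k => (nth false c k)%:R) ndB) lt_k4.
  by rewrite -[RHS]sum0; apply: eq_bigr => i _; rewrite mx_of_bpowers // scaler_nat.
by rewrite c_k => /eqP; rewrite oner_eq0.
Qed.

Definition bkrylov (v : seq bool) (B : bmx) : bmx := traject (bvmul^~ B) v 4.

Definition bfull_rank (K : bmx) : bool := all (fun c => has id (bvmul c K)) nonzero_bits.

(* K^419 = K^-1, since the exponent of GL_4(F_2) ~ A_8 is 420. *)
Definition binv (K : bmx) : bmx :=
  let K2 := bmul K K in let K4 := bmul K2 K2 in let K8 := bmul K4 K4 in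
  let K16 := bmul K8 K8 in let K32 := bmul K16 K16 in let K64 := bmul K32 K32 in
  let K128 := bmul K64 K64 in let K256 := bmul K128 K128 in
  bmul K256 (bmul K128 (bmul K32 (bmul K2 K))).

(* For the companion matrix C with last row [c0; c1; c2; c3], that is, of the
   characteristic polynomial x^4 + c3 x^3 + c2 x^2 + c1 x + c0, a matrix N0
   with N0^2 = 0 and (C + N0)^4 = C + N0. *)
Definition companion_split (c : seq bool) : bmx := map (map odd)
  match mkseq (nth false c) 4 with
  | [:: false; false; false; false] => [:: [:: 0; 0; 0; 0]; [:: 0; 0; 0; 0]; [:: 1; 0; 0; 0]; [:: 0; 0; 0; 0]]
  | [:: false; false; false; true] => [:: [:: 0; 0; 0; 0]; [:: 0; 0; 0; 1]; [:: 1; 0; 0; 0]; [:: 0; 0; 0; 0]]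
  | [:: false; false; true; false] => [:: [:: 0; 0; 0; 0]; [:: 1; 0; 0; 1]; [:: 1; 0; 0; 0]; [:: 0; 0; 0; 0]]
  | [:: false; false; true; true] => [:: [:: 0; 1; 0; 0]; [:: 0; 0; 0; 0]; [:: 0; 0; 0; 0]; [:: 0; 0; 0; 0]]
  | [:: false; true; false; false] => [:: [:: 0; 0; 0; 0]; [:: 0; 0; 0; 0]; [:: 0; 0; 0; 0]; [:: 0; 0; 0; 0]]
  | [:: false; true; false; true] => [:: [:: 0; 0; 0; 0]; [:: 0; 0; 1; 1]; [:: 0; 0; 0; 0]; [:: 0; 0; 0; 0]]
  | [:: false; true; true; false] => [:: [:: 1; 1; 0; 0]; [:: 1; 1; 0; 0]; [:: 0; 0; 0; 0]; [:: 0; 0; 0; 0]]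
  | [:: false; true; true; true] => [:: [:: 0; 0; 1; 0]; [:: 0; 0; 1; 0]; [:: 0; 0; 0; 0]; [:: 0; 0; 0; 0]]
  | [:: true; false; false; false] => [:: [:: 0; 1; 1; 0]; [:: 0; 0; 0; 0]; [:: 0; 0; 0; 0]; [:: 0; 0; 0; 0]]
  | [:: true; false; false; true] => [:: [:: 0; 0; 0; 1]; [:: 0; 1; 1; 0]; [:: 0; 1; 1; 0]; [:: 0; 0; 0; 0]]
  | [:: true; false; true; false] => [:: [:: 0; 1; 1; 1]; [:: 0; 0; 0; 0]; [:: 0; 0; 0; 0]; [:: 0; 0; 0; 0]]
  | [:: true; false; true; true] => [:: [:: 1; 1; 0; 0]; [:: 1; 1; 0; 0]; [:: 0; 0; 0; 0]; [:: 0; 0; 0; 0]]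
  | [:: true; true; false; false] => [:: [:: 0; 1; 0; 0]; [:: 0; 0; 0; 0]; [:: 0; 0; 0; 0]; [:: 0; 0; 0; 0]]
  | [:: true; true; false; true] => [:: [:: 0; 0; 0; 0]; [:: 1; 0; 0; 1]; [:: 0; 0; 0; 0]; [:: 0; 0; 0; 0]]
  | [:: true; true; true; false] => [:: [:: 0; 1; 0; 1]; [:: 0; 0; 0; 0]; [:: 0; 0; 0; 0]; [:: 0; 0; 0; 0]]
  | [:: true; true; true; true] => [:: [:: 1; 1; 0; 1]; [:: 1; 1; 0; 1]; [:: 0; 0; 0; 1]; [:: 0; 0; 0; 0]]
  | _ => [::]
  end.

(* The last row of K B K^-1 gives the coordinates of vB^4 in the basis
   v, vB, vB^2, vB^3. *)
Definition bsplit (B : bmx) : bmx * bmx :=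
  let cyclic v := bfull_rank (bkrylov v B) in
  let K := bkrylov (nth [::] nonzero_bits (find cyclic nonzero_bits)) B in
  let Kinv := binv K in
  let N0 := companion_split (bvmul (bvmul (last [::] K) B) Kinv) in
  let N := bmul Kinv (bmul N0 K) in
  (N, badd B N).

(* The size bounds are what [mx_of_bmx_mul] needs. *)
Definition bsplit_ok (B : bmx) (ND : bmx * bmx) : bool :=
  let: (N, D) := ND in let D2 := bmul D D in
  [&& (size N <= 4)%N, (size D <= 4)%N,
      beq B (badd N D), beq (bmul N N) b0 & beq (bmul D2 D2) D].

Lemma bsplit_okP B ND : bsplit_ok B ND ->
  exists N D : 'M['F_2]_4, [/\ mx_of_bmx B = N + D, N ^+ 2 = 0 & D ^+ 4 = D].
Proof.
case: ND => N D /and5P[le_N4 le_D4 /mx_of_bmx_eq eqB /mx_of_bmx_eq sqN /mx_of_bmx_eq idemD].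
exists (mx_of_bmx N), (mx_of_bmx D); split.
- by rewrite eqB mx_of_bmx_add.
- by rewrite expr2 -mulmxE -mx_of_bmx_mul // sqN mx_of_bmx0.
- by rewrite -[RHS]idemD !mx_of_bmx_mul ?size_map // !mulmxE !exprS expr0 mulr1 !mulrA.
Qed.

(* An [if] rather than [||], which would make the VM evaluate both sides. *)
Definition bcheck (B : bmx) : bool :=
  if bderogatory B then true else bsplit_ok B (bsplit B).

Lemma bcheck_all : all bcheck (tuples_over (bitseqs 4) 4).
Proof. by vm_compute. Qed.

Definition bmx_of_mx (B : 'M['F_2]_4) : bmx :=
  mkseq (fun i => mkseq (fun j => B (inord i) (inord j) != 0) 4) 4.

Lemma bmx_of_mxK : cancel bmx_of_mx mx_of_bmx.
Proof.
by move=> B; apply/matrixP => i j; rewrite mxE /bentry !nth_mkseq // !inord_val F2_natr_neq0.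
Qed.

Lemma bmx_of_mx_enum B : bmx_of_mx B \in tuples_over (bitseqs 4) 4.
Proof.
apply: mem_tuples_over; first exact: size_mkseq.
apply/allP => _ /mapP[i _ ->].
by apply: mem_tuples_over; [exact: size_mkseq | apply/allP => -[]].
Qed.

Theorem corollary2p6 (B : 'M['F_2]_4) :
  non_derogative B ->
  exists N D : 'M['F_2]_4, [/\ B = N + D, N ^+ 2 = 0 & D ^+ 4 = D].
Proof.
rewrite -(bmx_of_mxK B) => ndB.
have le_B4 : (size (bmx_of_mx B) <= 4)%N by rewrite size_mkseq.
have := allP bcheck_all _ (bmx_of_mx_enum B); rewrite /bcheck.
by case: ifP => [/(bderogatoryP le_B4)/(_ ndB) [] | _ /bsplit_okP].
Qed.
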